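(* For every integer $N\ge 0$, let $T(N)$ be the number of tilings of a $3\times 3\times n$ box, $n=2N/3$, by $N$ bricks of size $1\times 2\times 3$ (and $0$ if $3\nmid N$). Then, as formal power series, \[ \sum_{N\ge 0} T(N)\,z^N=\frac{1-z^3}{1-7z^3-22z^6-36z^9}. \]
   Context: A tiling of a $k\times m\times n$ box (made of $kmn$ unit cubes) by $a\times b\times c$ bricks is a partition of the box into non-overlapping axis-parallel boxes with integer corner coordinates, each congruent (by an axis-permuting placement) to the $a\times b\times c$ brick; all orientations are allowed. Tilings related by symmetries of the box are counted as distinct. The empty tiling counts once for $N=0$. *)

From mathcomp Require Import all_boot all_order all_algebra.
Set Implicit Arguments. Unset Strict Implicit. Unset Printing Implicit Defensive.
Import GRing.Theory.

(* A unit cell of the k x m x n box: integer coordinates (i,j,l),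
   0 <= i < k, 0 <= j < m, 0 <= l < n (the cube [i,i+1]x[j,j+1]x[l,l+1]). *)
Definition cell (k m n : nat) : finType := ('I_k * 'I_m * 'I_n)%type.

(* A candidate brick placement: lower corner (x,y,z) and side lengths
   (dx,dy,dz); it occupies [x,x+dx) x [y,y+dy) x [z,z+dz). *)
Definition brick (k m n : nat) : finType :=
  (('I_k * 'I_m * 'I_n) * ('I_k.+1 * 'I_m.+1 * 'I_n.+1))%type.

Definition bx k m n (b : brick k m n) : nat := b.1.1.1.
Definition by_ k m n (b : brick k m n) : nat := b.1.1.2.
Definition bz k m n (b : brick k m n) : nat := b.1.2.
Definition bdx k m n (b : brick k m n) : nat := b.2.1.1.
Definition bdy k m n (b : brick k m n) : nat := b.2.1.2.
Definition bdz k m n (b : brick k m n) : nat := b.2.2.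

Definition valid_brick (a b c : nat) k m n (br : brick k m n) : bool :=
  perm_eq [:: bdx br; bdy br; bdz br] [:: a; b; c]
  && (bx br + bdx br <= k) && (by_ br + bdy br <= m) && (bz br + bdz br <= n).

Definition covers k m n (br : brick k m n) (p : cell k m n) : bool :=
  (bx br <= p.1.1 < bx br + bdx br)
  && (by_ br <= p.1.2 < by_ br + bdy br)
  && (bz br <= p.2 < bz br + bdz br).

Definition is_tiling (a b c : nat) k m n (S : {set brick k m n}) : bool :=
  [forall br in S, valid_brick a b c br]
  && [forall p : cell k m n, #|[set br in S | covers br p]| == 1].

Definition num_tilings (a b c k m n N : nat) : nat :=
  #|[set S : {set brick k m n} | is_tiling a b c S && (#|S| == N)]|.

Definition T (N : nat) : nat :=
  if 3 %| N then num_tilings 1 2 3 3 3 (2 * N %/ 3) N else 0.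

Local Open Scope ring_scope.

Definition T_num : {poly int} := 1 - 'X^3.
Definition T_den : {poly int} := 1 - 7%:R *: 'X^3 - 22%:R *: 'X^6 - 36%:R *: 'X^9.

From mathcomp Require Import all_boot all_order all_algebra zify ring.
Set Implicit Arguments. Unset Strict Implicit. Unset Printing Implicit Defensive.

(* Build a tiling of the 3 x 3 x n box layer by layer.  Bricks are at most 3
   long, so what the bricks placed so far occupy beyond the current layer is a
   state on a window of three layers, and the number of ways to finish the
   tiling from a state is given by a transfer matrix.  Only 18 states are
   reachable from the empty one; on them, a finite computation checks that the
   vectors of counts for 0, 2, 4 and 6 layers satisfy v6 = 7 v4 + 22 v2 + 36 v0,
   and the transfer matrix propagates this relation to all heights.  Hence
   T(N + 9) = 7 T(N + 6) + 22 T(N + 3) + 36 T(N), which together with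
   T(0) = 1, T(3) = 6, T(6) = 64 is the claimed rational generating function. *)

Section TilingsOfRegion.
Variables (Piece Cell : finType) (valid : pred Piece) (covers : Piece -> Cell -> bool).
Implicit Types (R : {set Cell}) (S : {set Piece}) (b : Piece) (p q : Cell).

Definition footprint b : {set Cell} := [set q | covers b q].

Definition tiles R S : bool :=
  [forall b in S, valid b] && [forall p, #|[set b in S | covers b p]| == (p \in R)].

Definition ntilings R := #|[set S | tiles R S]|.

Lemma tilesP R S :
  reflect ((forall b, b \in S -> valid b) /\
           (forall p, #|[set b in S | covers b p]| = (p \in R)))
          (tiles R S).
Proof.
apply: (iffP andP) => [[/forall_inP vS /forallP cS]|[vS cS]].
  by split=> // p; apply/eqP.
by split; [apply/forall_inP | apply/forallP => p; rewrite cS].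
Qed.

Lemma tiles_valid R S b : tiles R S -> b \in S -> valid b.
Proof. by case/tilesP => vS _; apply: vS. Qed.

Lemma footprint_tiles R S b : tiles R S -> b \in S -> footprint b \subset R.
Proof.
case/tilesP => _ cS bS; apply/subsetP => q; rewrite inE => bq.
have := cS q; case: (q \in R) => // /card0_eq/(_ b).
by rewrite inE bS bq.
Qed.

Lemma tilesD1 R S b : tiles R S -> b \in S -> tiles (R :\: footprint b) (S :\ b).
Proof.
move=> tRS bS; have /subsetP bR := footprint_tiles tRS bS.
case/tilesP: tRS => vS cS; apply/tilesP; split=> [b'|q].
  by rewrite inE => /andP[_]; apply: vS.
have -> : [set b' in S :\ b | covers b' q] = [set b' in S | covers b' q] :\ b.
  by apply/setP => b'; rewrite !inE andbA.
have := cardsD1 b [set b' in S | covers b' q]; rewrite cS !inE bS /=.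
case bq: (covers b q) => /=; last by rewrite add0n.
by rewrite bR ?inE //; case: #|_|.
Qed.

Lemma tilesU1 R S b : tiles (R :\: footprint b) S -> valid b ->
  footprint b \subset R -> footprint b != set0 -> b \notin S /\ tiles R (b |: S).
Proof.
move=> tRS vb /subsetP bR /set0Pn[p bp].
have bS : b \notin S.
  by apply/negP => /(footprint_tiles tRS)/subsetP/(_ p bp); rewrite inE bp.
split=> //; case/tilesP: tRS => vS cS; apply/tilesP; split=> [b'|q].
  by rewrite !inE => /orP[/eqP->|/vS].
have := cS q; rewrite !inE.
case bq: (covers b q) => /= cSq.
  have -> : [set b' in b |: S | covers b' q] = b |: [set b' in S | covers b' q].
    by apply/setP => b'; rewrite !inE; case: eqP => [->|].
  by rewrite cardsU1 cSq inE (negbTE bS) bR // inE.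
rewrite -cSq; apply: eq_card => b'; rewrite !inE.
by case: eqP => [->|]; rewrite ?bq ?andbF.
Qed.

Lemma ntilings_pivot R p : p \in R ->
  (forall b, valid b -> footprint b != set0) ->
  ntilings R = \sum_(b | valid b && covers b p && (footprint b \subset R))
                 ntilings (R :\: footprint b).
Proof.
move=> pR nz; rewrite /ntilings -sum1_card.
transitivity (\sum_(S in [set S | tiles R S])
   \sum_(b | valid b && covers b p && (footprint b \subset R)) (b \in S : nat)).
  apply: eq_bigr => S; rewrite inE => tRS.
  rewrite -big_mkcondr sum1_card; case/tilesP: (tRS) => _ /(_ p); rewrite pR /= => <-.
  apply: eq_card => b; rewrite !inE.
  apply/andP/andP => [[bS bp]|[/andP[/andP[_ bp] _] bS]] //.
  by rewrite bp (tiles_valid tRS) ?(footprint_tiles tRS).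
rewrite exchange_big /=; apply: eq_bigr => b /andP[/andP[vb _] bR].
rewrite -big_mkcondr sum1_card.
rewrite -[RHS](card_in_imset (f := fun S => b |: S)); last first.
  move=> S1 S2; rewrite !inE => t1 t2 eqS.
  have [n1 _] := tilesU1 t1 vb bR (nz b vb).
  have [n2 _] := tilesU1 t2 vb bR (nz b vb).
  by rewrite -(setU1K n1) eqS setU1K.
apply: eq_card => S; rewrite -[S \in _]topredE /= inE; apply/andP/imsetP => [[tRS bS]|[S']].
  by exists (S :\ b); rewrite ?inE ?tilesD1 ?setD1K.
rewrite inE => tS' ->; have [_ t] := tilesU1 tS' vb bR (nz b vb).
by rewrite setU11 t.
Qed.

Lemma ntilings0 : (forall b, valid b -> footprint b != set0) -> ntilings set0 = 1.
Proof.
move=> nz; rewrite /ntilings -(cards1 (set0 : {set Piece})); apply: eq_card => S.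
rewrite !inE; apply/idP/eqP => [tS|->].
  apply/setP => b; rewrite inE; apply/negP => bS.
  have /subsetP sub0 := footprint_tiles tS bS.
  by case/set0Pn: (nz b (tiles_valid tS bS)) => q /sub0; rewrite inE.
apply/tilesP; split=> [b|p]; rewrite ?inE //.
by apply: eq_card0 => b; rewrite !inE.
Qed.

Lemma card_tiles k : (forall b, valid b -> #|footprint b| = k) ->
  forall R S, tiles R S -> #|S| * k = #|R|.
Proof.
move=> fk R S; move cS: #|S| => m; elim: m R S cS => [|m IH] R S cS tRS.
  move/cards0_eq: cS tRS => -> /tilesP[_ c0]; apply/esym/eqP; rewrite cards_eq0.
  apply/eqP/setP => p; rewrite inE; move: (c0 p).
  by rewrite (@eq_card0 _ [set b in set0 | covers b p]) => [|b]; rewrite ?inE //; case: (p \in R).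
have /card_gt0P[b bS] : 0 < #|S| by rewrite cS.
rewrite (cardsD1 b S) bS in cS.
have vb := tiles_valid tRS bS; have bR := footprint_tiles tRS bS.
have := IH _ _ (eq_add_S _ _ cS) (tilesD1 tRS bS).
rewrite cardsD (setIidPr bR) fk // mulSn => ->.
by rewrite subnKC // -(fk b vb) subset_leq_card.
Qed.

End TilingsOfRegion.

Implicit Types (d : nat * nat * nat) (st : seq bool).

Definition orientations : seq (nat * nat * nat) :=
  [seq (nth 0 s 0, nth 0 s 1, nth 0 s 2) | s <- permutations [:: 1; 2; 3]].

Lemma mem_orientations a b c :
  ((a, b, c) \in orientations) = perm_eq [:: a; b; c] [:: 1; 2; 3].
Proof.
rewrite -mem_permutations; apply/mapP/idP => [[s ps [-> -> ->]]|]; last first.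
  by exists [:: a; b; c].
rewrite mem_permutations in ps; rewrite mem_permutations.
by case: s ps => [|x [|y [|z [|? ?]]]] ps //; have := perm_size ps.
Qed.

Lemma orientation_dims d : d \in orientations ->
  [/\ 0 < d.1.1 <= 3, 0 < d.1.2 <= 3, 0 < d.2 <= 3 & d.1.1 * d.1.2 * d.2 = 6].
Proof.
have : all (fun d : nat * nat * nat => [&& 0 < d.1.1 <= 3, 0 < d.1.2 <= 3,
  0 < d.2 <= 3 & d.1.1 * d.1.2 * d.2 == 6]) orientations by vm_compute.
by move=> /allP o_dims /o_dims /and4P[-> -> -> /eqP].
Qed.

(* A state lists which cells of a 3 x 3 x 3 window of consecutive layers are
   already occupied; window cell (x, y, z) has index x + 3 y + 9 z. *)
Definition empty_state : seq bool := nseq 27 false.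

Definition in_brick (i : nat) (d : nat * nat * nat) (j : nat) : bool :=
  [&& i %% 3 <= j %% 3 < i %% 3 + d.1.1, i %/ 3 <= j %/ 3 %% 3 < i %/ 3 + d.1.2
    & j %/ 9 < d.2].

Definition place (st : seq bool) i d :=
  [seq nth false st j || in_brick i d j | j <- iota 0 27].

Definition placeable (st : seq bool) i d :=
  [&& i %% 3 + d.1.1 <= 3, i %/ 3 + d.1.2 <= 3 &
    all (fun j => ~~ (nth false st j && in_brick i d j)) (iota 0 27)].

Definition first_free (st : seq bool) := find (fun j => ~~ nth false st j) (iota 0 9).

(* All ways of completing the bottom layer, always covering its first free
   cell by a brick with lower corner there; [k] is fuel. *)
Fixpoint fill_layer (k : nat) (st : seq bool) : seq (seq bool) :=
  if k is k'.+1 then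
    if first_free st < 9 then
      flatten [seq fill_layer k' (place st (first_free st) d)
              | d <- orientations & placeable st (first_free st) d]
    else [:: st]
  else [:: st].

Definition shift (st : seq bool) := drop 9 st ++ nseq 9 false.

Fixpoint completions (h : nat) (st : seq bool) : nat :=
  if h is h'.+1 then sumn [seq completions h' (shift st') | st' <- fill_layer 9 st]
  else st == empty_state.

Definition fits h (st : seq bool) :=
  all (fun j => ~~ nth false st j || (j %/ 9 < h)) (iota 0 27).

Definition free_cells (st : seq bool) := [set j : 'I_9 | ~~ nth false st j].

Lemma fitsP h st : size st = 27 ->
  reflect (forall j, nth false st j -> j %/ 9 < h) (fits h st).
Proof.
move=> sz; apply: (iffP allP) => fit j.
  case: (ltnP j 27) => j27; last by rewrite nth_default ?sz.
  by move=> stj; have := fit j; rewrite mem_iota j27 stj; apply.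
by move=> _; case stj: (nth false st j) => //=; apply: fit.
Qed.

Lemma size_place st i d : size (place st i d) = 27.
Proof. by rewrite size_map size_iota. Qed.

Lemma nth_place st i d j : size st = 27 -> d.2 <= 3 ->
  nth false (place st i d) j = nth false st j || in_brick i d j.
Proof.
move=> sz d3; case: (ltnP j 27) => j27.
  by rewrite (nth_map 0) ?size_iota // nth_iota.
rewrite !nth_default ?sz ?size_place //=.
by apply/esym/negP => /and3P[_ _]; lia.
Qed.

Lemma in_brick_corner i d : i < 9 -> d \in orientations -> in_brick i d i.
Proof. by move=> i9 /orientation_dims[]; rewrite /in_brick; lia. Qed.

Lemma fits_place h st i d : size st = 27 -> fits h st -> i < 9 -> d \in orientations ->
  fits h (place st i d) = (d.2 <= h).
Proof.
move=> sz /(fitsP _ sz) fit i9 od.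
have [dx dy /andP[_ d3] _] := orientation_dims od.
apply/(fitsP _ (size_place _ _ _))/idP => [fP|dh j].
  rewrite leqNgt; apply/negP => hd.
  have /fP : nth false (place st i d) (i + 9 * h).
    rewrite nth_place //; apply/orP; right; apply/and3P; split; lia.
  lia.
by rewrite nth_place // => /orP[/fit //|/and3P[_ _]]; lia.
Qed.

Lemma first_freeP st : first_free st < 9 ->
  ~~ nth false st (first_free st) /\ forall j, j < first_free st -> nth false st j.
Proof.
move=> ff9; split.
  have := nth_find 0 (_ : has (fun j => ~~ nth false st j) (iota 0 9)).
  by rewrite nth_iota // has_find size_iota; apply.
move=> j jff; have j9 : j < 9 by apply: ltn_trans ff9.
by have := before_find 0 jff; rewrite nth_iota // add0n => /negbFE.
Qed.

Lemma free_cells0 st : first_free st >= 9 -> free_cells st = set0.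
Proof.
rewrite /first_free -[X in X <= _](size_iota 0 9) leqNgt -has_find => /hasPn nfree.
by apply/setP => j; rewrite !inE; apply/negbTE/nfree; rewrite mem_iota /=.
Qed.

Lemma card_free_place st d : size st = 27 -> first_free st < 9 -> d \in orientations ->
  #|free_cells (place st (first_free st) d)| < #|free_cells st|.
Proof.
move=> sz ff9 od; have [_ _ /andP[_ d3] _] := orientation_dims od.
apply: proper_card; apply/properP; split.
  by apply/subsetP => j; rewrite !inE nth_place // negb_or => /andP[].
exists (Ordinal ff9); rewrite !inE /= ?nth_place ?in_brick_corner ?orbT //.
by case: (first_freeP ff9).
Qed.

Lemma fill_layerS k st : fill_layer k.+1 st =
  if first_free st < 9 then
    flatten [seq fill_layer k (place st (first_free st) d)
            | d <- orientations & placeable st (first_free st) d]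
  else [:: st].
Proof. by []. Qed.

Lemma fill_layer_grows k st st' : size st = 27 -> st' \in fill_layer k st ->
  size st' = 27 /\ forall j, nth false st j -> nth false st' j.
Proof.
elim: k st => [|k IH] st sz; first by rewrite inE => /eqP ->.
rewrite fill_layerS; case: ifP => ff9; last by rewrite inE => /eqP ->.
case/flattenP => s /mapP[d]; rewrite mem_filter => /andP[_ od] -> st'P.
have [_ _ /andP[_ d3] _] := orientation_dims od.
have [sz' grows] := IH _ (size_place _ _ _) st'P; split=> // j stj.
by apply: grows; rewrite nth_place // stj.
Qed.

Lemma fill_layer_full k st st' : size st = 27 -> #|free_cells st| <= k ->
  st' \in fill_layer k st -> forall j, j < 9 -> nth false st' j.
Proof.
elim: k st => [|k IH] st sz nfree_st.
  rewrite inE => /eqP -> j j9; move: nfree_st; rewrite leqn0 cards_eq0 => /eqP/setP.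
  by move=> /(_ (Ordinal j9)); rewrite !inE => /negbFE.
rewrite fill_layerS; case: ltnP => ff9.
  case/flattenP => s /mapP[d]; rewrite mem_filter => /andP[_ od] ->.
  apply: IH; first exact: size_place.
  by have := card_free_place sz ff9 od; lia.
rewrite inE => /eqP -> j j9; move/free_cells0/setP/(_ (Ordinal j9)): ff9.
by rewrite !inE => /negbFE.
Qed.

Lemma size_shift st : size st = 27 -> size (shift st) = 27.
Proof. by move=> sz; rewrite size_cat size_drop size_nseq sz. Qed.

Lemma nth_shift st j : size st = 27 -> nth false (shift st) j = nth false st (j + 9).
Proof.
move=> sz; rewrite /shift nth_cat size_drop sz.
case: ltnP => j18; first by rewrite nth_drop addnC.
by rewrite nth_nseq if_same nth_default // sz; lia.
Qed.

Lemma fits_shift h st : size st = 27 -> fits h (shift st) = fits h.+1 st.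
Proof.
move=> sz; apply/(fitsP _ (size_shift sz))/(fitsP _ sz) => fit j.
  case: (ltnP j 9) => j9 stj; first lia.
  by have := fit (j - 9); rewrite nth_shift // subnK // => /(_ stj); lia.
by rewrite nth_shift // => /fit; lia.
Qed.

Lemma fits_subset h st st' : size st = 27 -> size st' = 27 ->
  (forall j, nth false st j -> nth false st' j) -> fits h st' -> fits h st.
Proof. by move=> sz sz' sub /(fitsP _ sz') fit'; apply/(fitsP _ sz) => j /sub/fit'. Qed.

Lemma fits0 st : size st = 27 -> fits 0 st -> st = empty_state.
Proof.
move=> sz /(fitsP _ sz) fit; apply: (@eq_from_nth _ false); first by rewrite sz.
by move=> j _; rewrite nth_nseq if_same; apply/negP => /fit.
Qed.

Lemma completionsS h st :
  completions h.+1 st = \sum_(st' <- fill_layer 9 st) completions h (shift st').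
Proof.
have -> : completions h.+1 st =
  sumn [seq completions h (shift st') | st' <- fill_layer 9 st] by [].
by rewrite sumnE big_map.
Qed.

Lemma completions_unfit h st : size st = 27 -> ~~ fits h st -> completions h st = 0.
Proof.
elim: h st => [|h IH] st sz unfit.
  by rewrite /=; case: eqP => // st0; case/negP: unfit; rewrite st0.
rewrite completionsS big1_seq // => st' /andP[_ st'P].
have [sz' grows] := fill_layer_grows sz st'P.
rewrite IH ?size_shift // fits_shift //; apply: contra unfit; exact: fits_subset.
Qed.

Lemma card_interval k a l : a + l <= k -> #|[set x : 'I_k | a <= x < a + l]| = l.
Proof.
move=> alk.
have -> : #|[set x : 'I_k | a <= x < a + l]| = count (fun x => a <= x < a + l) (iota 0 k).
  rewrite cardE /enum_mem size_filter -val_enum_ord count_map enumT.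
  by apply: eq_count => x; rewrite /= inE.
rewrite -(subnKC alk) -addnA !iotaD !count_cat add0n.
rewrite (@eq_in_count _ _ pred0 (iota 0 a)) => [|x]; last by rewrite mem_iota /=; lia.
rewrite (@eq_in_count _ _ predT (iota a l)) => [|x]; last by rewrite mem_iota /=; lia.
rewrite (@eq_in_count _ _ pred0 (iota (a + l) _)) => [|x]; last by rewrite mem_iota /=; lia.
by rewrite !count_pred0 count_predT size_iota addn0.
Qed.

Section Box.
Variable n : nat.

Local Notation valid := (@valid_brick 1 2 3 3 3 n).
Local Notation covers := (@covers 3 3 n).
Local Notation ntilings := (ntilings valid covers).
Local Notation footprint := (footprint covers).

Lemma valid_brickE (c : cell 3 3 n) (dx dy : 'I_4) (dz : 'I_n.+1) :
  valid (c, (dx, dy, dz)) =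
  [&& ((dx : nat), (dy : nat), (dz : nat)) \in orientations,
      c.1.1 + dx <= 3, c.1.2 + dy <= 3 & c.2 + dz <= n].
Proof. by rewrite /valid_brick mem_orientations !andbA. Qed.

Lemma coversE (c : cell 3 3 n) (dx dy : 'I_4) (dz : 'I_n.+1) q :
  covers (c, (dx, dy, dz)) q = [&& c.1.1 <= q.1.1 < c.1.1 + dx,
                                  c.1.2 <= q.1.2 < c.1.2 + dy & c.2 <= q.2 < c.2 + dz].
Proof. by rewrite /covers -andbA. Qed.

Lemma covers_corner b : valid b -> covers b b.1.
Proof.
case: b => [[[x y] z] [[dx dy] dz]]; rewrite valid_brickE.
by case/and4P => /orientation_dims[] /=; rewrite coversE /=; lia.
Qed.

Lemma footprint_neq0 b : valid b -> footprint b != set0.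
Proof. by move=> vb; apply/set0Pn; exists b.1; rewrite inE covers_corner. Qed.

Lemma card_footprint b : valid b -> #|footprint b| = 6.
Proof.
case: b => [[[x y] z] [[dx dy] dz]]; rewrite valid_brickE.
case/and4P => /orientation_dims[_ _ _ /= vol] xd yd zd.
have -> : footprint ((x, y, z), (dx, dy, dz)) =
   setX (setX [set u : 'I_3 | x <= u < x + dx] [set u : 'I_3 | y <= u < y + dy])
        [set u : 'I_n | z <= u < z + dz].
  by apply/setP => [[[u v] w]]; rewrite !inE coversE /= andbA.
by rewrite !cardsX !card_interval.
Qed.

Definition window_index h (q : cell 3 3 n) := q.1.1 + 3 * q.1.2 + 9 * (q.2 - (n - h)).

(* The cells left to tile when [h] layers remain and [st] is the state of the
   window starting at layer [n - h]; cells above the window are free. *)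
Definition region h st : {set cell 3 3 n} :=
  [set q : cell 3 3 n | (n - h <= q.2) && ~~ nth false st (window_index h q)].

Definition brick_at (p : cell 3 3 n) d : brick 3 3 n :=
  (p, (inord d.1.1, inord d.1.2, inord d.2)).

Lemma window_indexP h j : h <= n -> j < 9 * h ->
  exists2 q : cell 3 3 n, n - h <= q.2 & window_index h q = j.
Proof.
move=> hn jh; have x3 : j %% 3 < 3 by rewrite ltn_mod.
have y3 : j %/ 3 %% 3 < 3 by rewrite ltn_mod.
have zn : n - h + j %/ 9 < n by lia.
by exists ((Ordinal x3, Ordinal y3), Ordinal zn); rewrite /window_index /=; lia.
Qed.

Lemma brick_at_inj (p : cell 3 3 n) d1 d2 :
  d1 \in orientations -> d2 \in orientations -> d1.2 <= n -> d2.2 <= n ->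
  brick_at p d1 = brick_at p d2 -> d1 = d2.
Proof.
case: d1 d2 => [[x1 y1] z1] [[x2 y2] z2].
move=> /orientation_dims[/andP[_ x1_3] /andP[_ y1_3] _ _].
move=> /orientation_dims[/andP[_ x2_3] /andP[_ y2_3] _ _] /= z1n z2n.
case=> /(congr1 val) + /(congr1 val) + /(congr1 val).
by rewrite /= !inordK ?ltnS // => -> -> ->.
Qed.

Section Pivot.
Variables (h : nat) (st : seq bool) (px py : 'I_3) (pz : 'I_n).
Hypotheses (h_le_n : h <= n) (p_bottom : pz = n - h :> nat).
Local Notation p := ((px, py, pz) : cell 3 3 n).
Local Notation i := (px + 3 * py).

Fact i_mod3 : i %% 3 = px.
Proof. by have := ltn_ord px; lia. Qed.

Fact i_div3 : i %/ 3 = py.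
Proof. by have := ltn_ord px; lia. Qed.

Fact window_index_pivot : window_index h p = i.
Proof. by rewrite /window_index p_bottom subnn muln0 addn0. Qed.

Lemma covers_brick_at d q : d \in orientations -> d.2 <= n ->
  covers (brick_at p d) q = (n - h <= q.2) && in_brick i d (window_index h q).
Proof.
move=> /orientation_dims[/andP[_ dx] /andP[_ dy] _ _] dz.
case: q => [[qx qy] qz]; rewrite /brick_at coversE /in_brick /window_index /=.
rewrite !inordK ?ltnS // i_mod3 i_div3 p_bottom.
have := ltn_ord qx; have := ltn_ord qy.
by case: leqP => hq qy3 qx3; apply/idP/idP; lia.
Qed.

Lemma valid_brick_at d : d \in orientations -> d.2 <= n ->
  valid (brick_at p d) = [&& i %% 3 + d.1.1 <= 3, i %/ 3 + d.1.2 <= 3 & d.2 <= h].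
Proof.
move=> od; have [/andP[_ dx] /andP[_ dy] _ _] := orientation_dims od => dz.
rewrite /brick_at valid_brickE !inordK ?ltnS // -!surjective_pairing od i_mod3 i_div3.
by rewrite p_bottom /=; congr [&& _, _ & _]; apply/idP/idP; lia.
Qed.

Lemma footprint_brick_at d : d \in orientations -> d.2 <= h ->
  (footprint (brick_at p d) \subset region h st) =
  all (fun j => ~~ (nth false st j && in_brick i d j)) (iota 0 27).
Proof.
move=> od dh; have [_ _ /andP[_ d3] _] := orientation_dims od.
have dn : d.2 <= n by apply: leq_trans h_le_n.
apply/subsetP/allP => [sub j|free q].
  rewrite mem_iota => /andP[_ j27]; apply/negP => /andP[stj jd].
  have [q hq qj] : exists2 q : cell 3 3 n, n - h <= q.2 & window_index h q = j.
    by apply: window_indexP => //; move: jd => /and3P[_ _]; lia.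
  have /sub : q \in footprint (brick_at p d) by rewrite inE covers_brick_at // hq qj.
  by rewrite inE hq qj stj.
rewrite !inE covers_brick_at // => /andP[hq qd]; rewrite hq /=.
apply: contraTN (qd) => stq; apply/negP => qd'; move: (free (window_index h q)).
by rewrite mem_iota stq qd /=; move: qd' => /and3P[_ _]; rewrite /window_index; lia.
Qed.

Lemma region_brick_at d : size st = 27 -> d \in orientations -> d.2 <= n ->
  region h st :\: footprint (brick_at p d) = region h (place st i d).
Proof.
move=> sz od dn; have [_ _ /andP[_ d3] _] := orientation_dims od.
apply/setP => q; rewrite !inE covers_brick_at // nth_place //.
by case: (n - h <= q.2); rewrite // negb_or andbC.
Qed.

Hypothesis p_first_free : forall j, j < i -> nth false st j.

Lemma pivot_corner b : valid b -> covers b p -> footprint b \subset region h st ->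
  b.1 = p.
Proof.
case: b => [[[cx cy] cz] [[dx dy] dz]] vb; rewrite coversE /= => cp /subsetP sub.
have /sub : (cx, cy, cz) \in footprint ((cx, cy, cz), (dx, dy, dz)).
  by rewrite inE (covers_corner vb).
rewrite inE /window_index /= => /andP[cz_ge free_c].
move: cp; rewrite p_bottom => cp.
have cz_eq : cz = n - h :> nat by lia.
have c_i : cx + 3 * cy = i.
  rewrite cz_eq subnn muln0 addn0 in free_c.
  have : i <= cx + 3 * cy by rewrite leqNgt; apply: contra free_c => /p_first_free.
  by move: cp; lia.
have px3 := ltn_ord px; have cx3 := ltn_ord cx.
by congr (_, _, _); apply: val_inj; rewrite /= ?p_bottom //; lia.
Qed.

Lemma pivot_bricks b :
  valid b && covers b p && (footprint b \subset region h st) =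
  (b \in [seq brick_at p d | d <- orientations & placeable st i d && (d.2 <= h)]).
Proof.
apply/idP/mapP => [/andP[/andP[vb bp] sub]|[d]].
  have := pivot_corner vb bp sub.
  case: b vb bp sub => c [[dx dy] dz] vb _ sub c_p; rewrite /= in c_p; subst c.
  set d := ((dx : nat), (dy : nat), (dz : nat)).
  have od : d \in orientations by move: vb; rewrite valid_brickE => /and4P[].
  have dn : d.2 <= n by rewrite -ltnS ltn_ord.
  have bd : (p, (dx, dy, dz)) = brick_at p d by rewrite /brick_at !inord_val.
  rewrite bd valid_brick_at // in vb; rewrite bd in sub.
  case/and3P: vb => v1 v2 dh; exists d => //.
  by rewrite mem_filter od andbT /placeable v1 v2 dh -footprint_brick_at ?sub.
rewrite mem_filter => /andP[/andP[/and3P[v1 v2 free] dh] od] ->.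
have dn := leq_trans dh h_le_n.
rewrite valid_brick_at // v1 v2 dh covers_brick_at // window_index_pivot /= p_bottom leqnn.
rewrite in_brick_corner ?footprint_brick_at //.
by have := ltn_ord px; have := ltn_ord py; lia.
Qed.
End Pivot.

Lemma ntilings_region_step h st : 0 < h <= n -> size st = 27 ->
  first_free st < 9 ->
  ntilings (region h st) =
  \sum_(d <- orientations | placeable st (first_free st) d && (d.2 <= h))
     ntilings (region h (place st (first_free st) d)).
Proof.
case/andP => h0 hn sz ff9; have [ff_free ff_first] := first_freeP ff9.
have x3 : first_free st %% 3 < 3 by rewrite ltn_mod.
have y3 : first_free st %/ 3 < 3 by lia.
have zn : n - h < n by lia.
have ff_i : first_free st = Ordinal x3 + 3 * Ordinal y3 by rewrite /=; lia.
have pR : (Ordinal x3, Ordinal y3, Ordinal zn) \in region h st.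
  by rewrite inE window_index_pivot //= leqnn -ff_i.
rewrite ff_i in ff_first *.
rewrite (ntilings_pivot pR (@footprint_neq0)).
rewrite (eq_bigl _ _ (@pivot_bricks _ _ _ _ (Ordinal zn) hn erefl ff_first)).
rewrite -big_uniq; last first.
  rewrite map_inj_in_uniq ?filter_uniq // => d1 d2.
  rewrite !mem_filter => /andP[/andP[_ dh1] o1] /andP[/andP[_ dh2] o2].
  by apply: brick_at_inj; rewrite // (leq_trans _ hn).
rewrite big_map big_filter.
rewrite big_seq_cond [RHS]big_seq_cond; apply: eq_bigr => d /andP[od /andP[_ dh]].
by rewrite region_brick_at // (leq_trans dh).
Qed.

Lemma ntilings_region_fill k h st : 0 < h <= n -> size st = 27 -> fits h st ->
  #|free_cells st| <= k ->
  ntilings (region h st) = \sum_(st' <- fill_layer k st | fits h st') ntilings (region h st').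
Proof.
elim: k st => [|k IH] st hh sz fit nfree_st; first by rewrite big_cons big_nil fit addn0.
rewrite fill_layerS; case: ifP => ff9; last by rewrite big_cons big_nil fit addn0.
rewrite ntilings_region_step // big_flatten big_map big_filter big_mkcondr /=.
rewrite big_seq_cond [RHS]big_seq_cond; apply: eq_bigr => d /andP[od placeable_d].
have [_ _ /andP[_ d3] _] := orientation_dims od.
case: ifP => dh.
  apply: IH; rewrite ?size_place ?fits_place //.
  by have := card_free_place sz ff9 od; lia.
apply/esym/big1_seq => st' /andP[fit' st'P].
have [sz' grows] := fill_layer_grows (size_place st (first_free st) d) st'P.
by move: (fits_subset (size_place _ _ _) sz' grows fit'); rewrite fits_place ?dh.
Qed.

Lemma region_shift h st : h < n -> size st = 27 -> (forall j, j < 9 -> nth false st j) ->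
  region h.+1 st = region h (shift st).
Proof.
move=> hn sz full; apply/setP => -[[qx qy] qz]; rewrite !inE /window_index /= nth_shift //.
have qx3 := ltn_ord qx; have qy3 := ltn_ord qy.
case: (ltnP qz (n - h.+1)) => [qlo|qhi].
  by rewrite leqNgt (leq_trans qlo) // leq_sub2l.
case: (ltnP qz (n - h)) => [qlo|qhi'] /=.
  by rewrite full; lia.
by congr (~~ nth _ _ _); lia.
Qed.

Lemma ntilings_region h st : h <= n -> size st = 27 -> fits h st ->
  ntilings (region h st) = completions h st.
Proof.
elim: h st => [|h IH] st hn sz fit.
  have -> : completions 0 st = 1 by rewrite (fits0 sz fit).
  rewrite -[RHS](ntilings0 (@footprint_neq0)).
  by congr ntilings; apply/setP => q; rewrite !inE subn0 leqNgt ltn_ord.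
rewrite (@ntilings_region_fill 9) //; last by rewrite (leq_trans (max_card _)) ?card_ord.
rewrite completionsS [RHS](bigID (fits h.+1)).
rewrite [X in _ = _ + X]big1_seq ?addn0 => [|st' /andP[unfit st'P]]; last first.
  have [sz' _] := fill_layer_grows sz st'P.
  by rewrite completions_unfit ?size_shift ?fits_shift.
rewrite big_seq_cond [RHS]big_seq_cond; apply: eq_bigr => st' /andP[st'P fit'].
have [sz' _] := fill_layer_grows sz st'P.
rewrite region_shift ?IH ?size_shift ?fits_shift //; first exact: ltnW.
by apply: fill_layer_full st'P; rewrite // (leq_trans (max_card _)) ?card_ord.
Qed.
End Box.

(* The states reachable from the empty state at layer boundaries, each
   given by the list of its occupied window cells. *)
Definition states : seq (seq bool) := [seq [seq j \in l | j <- iota 0 27] | l <- [::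
  [:: ];
  [:: 0; 1; 2; 3; 4; 5; 6; 7; 8; 9; 10; 11; 12; 13; 14];
  [:: 0; 1; 2; 3; 4; 5; 6; 7; 8; 9; 10; 12; 13; 15; 16];
  [:: 0; 1; 2; 3; 4; 5; 6; 7; 8; 10; 11; 13; 14; 16; 17];
  [:: 0; 1; 2; 3; 4; 5; 6; 7; 8];
  [:: 0; 3; 6];
  [:: 2; 5; 8];
  [:: 0; 1; 2; 3; 4; 5; 6; 7; 8; 12; 13; 14; 15; 16; 17];
  [:: 0; 1; 2];
  [:: 6; 7; 8];
  [:: 0; 1; 2; 3; 4; 5];
  [:: 0; 1; 3; 4; 6; 7];
  [:: 1; 2; 4; 5; 7; 8];
  [:: 1; 2; 4; 5; 7; 8; 10; 11; 13; 14; 16; 17];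
  [:: 0; 1; 3; 4; 6; 7; 9; 10; 12; 13; 15; 16];
  [:: 3; 4; 5; 6; 7; 8];
  [:: 3; 4; 5; 6; 7; 8; 12; 13; 14; 15; 16; 17];
  [:: 0; 1; 2; 3; 4; 5; 9; 10; 11; 12; 13; 14]]].

(* A memoised evaluation of [completions h] on [states]. *)
Fixpoint state_counts (h : nat) : seq nat :=
  if h is h'.+1 then
    let v := state_counts h' in
    [seq sumn [seq nth 0 v (index (shift st') states) | st' <- fill_layer 9 st]
    | st : seq bool <- states]
  else [seq nat_of_bool (st == empty_state) | st : seq bool <- states].

Lemma states_closed :
  all (fun st => all (fun st' => shift st' \in states) (fill_layer 9 st)) states.
Proof. by vm_compute. Qed.

Lemma state_counts_rec :
  let v6 := state_counts 6 in let v4 := state_counts 4 in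
  let v2 := state_counts 2 in let v0 := state_counts 0 in
  all (fun j => nth 0 v6 j == 7 * nth 0 v4 j + 22 * nth 0 v2 j + 36 * nth 0 v0 j)
    (iota 0 (size states)).
Proof. by vm_compute. Qed.

Lemma shift_fill_layer_states st st' :
  st \in states -> st' \in fill_layer 9 st -> shift st' \in states.
Proof. by move=> /(allP states_closed)/allP; apply. Qed.

Lemma state_countsS h : state_counts h.+1 =
  [seq sumn [seq nth 0 (state_counts h) (index (shift st') states) | st' <- fill_layer 9 st]
  | st : seq bool <- states].
Proof. by []. Qed.

Lemma nth_state_counts h st : st \in states ->
  nth 0 (state_counts h) (index st states) = completions h st.
Proof.
elim: h st => [|h IH] st sz.
  by rewrite /state_counts (nth_map [::]) ?index_mem // nth_index.
rewrite state_countsS (nth_map [::]) ?index_mem // nth_index // completionsS.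
rewrite sumnE big_map big_seq [RHS]big_seq; apply: eq_bigr => st' st'P.
by rewrite IH // (shift_fill_layer_states sz st'P).
Qed.

Lemma completions_rec h st : st \in states ->
  completions (h + 6) st =
  7 * completions (h + 4) st + 22 * completions (h + 2) st + 36 * completions h st.
Proof.
elim: h st => [|h IH] st sz.
  have := state_counts_rec; cbv zeta => /allP /(_ (index st states)).
  by rewrite mem_iota index_mem sz !nth_state_counts // => /(_ isT)/eqP.
rewrite !addSn !completionsS !big_distrr -!big_split big_seq [RHS]big_seq.
by apply: eq_bigr => st' st'P; rewrite IH // (shift_fill_layer_states sz st'P).
Qed.

Lemma empty_state_in_states : empty_state \in states.
Proof. by vm_compute. Qed.

Lemma completions_small :
  [/\ completions 0 empty_state = 1, completions 2 empty_state = 6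
    & completions 4 empty_state = 64].
Proof.
by rewrite -!(nth_state_counts _ empty_state_in_states); split; vm_compute.
Qed.

Lemma is_tiling_tiles n S :
  is_tiling 1 2 3 S = tiles (@valid_brick 1 2 3 3 3 n) (@covers 3 3 n) [set: cell 3 3 n] S.
Proof. by congr (_ && _); apply: eq_forallb => p; rewrite in_setT. Qed.

Lemma region_full n : region n n empty_state = [set: cell 3 3 n].
Proof. by apply/setP => q; rewrite !inE subnn nth_nseq if_same. Qed.

Lemma fits_empty h : fits h empty_state.
Proof. by apply/(fitsP _ (size_nseq _ _)) => j; rewrite nth_nseq if_same. Qed.

Lemma num_tilings_box n N : 9 * n = 6 * N ->
  num_tilings 1 2 3 3 3 n N = completions n empty_state.
Proof.
move=> vol; rewrite -(@ntilings_region n) ?size_nseq ?fits_empty // region_full.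
apply: eq_card => S; rewrite !inE is_tiling_tiles; case tS: tiles => //=.
rewrite -(eqn_pmul2r (_ : 0 < 6)) // (card_tiles (@card_footprint n) tS).
by rewrite cardsT !card_prod !card_ord; apply/eqP; lia.
Qed.

Lemma T_mul3 m : T (m * 3) = completions (2 * m) empty_state.
Proof.
by rewrite /T dvdn_mull // mulnA mulnK // num_tilings_box; lia.
Qed.

Lemma T_ndvd N : ~~ (3 %| N) -> T N = 0.
Proof. by rewrite /T => /negbTE ->. Qed.

Import GRing.Theory.
Local Open Scope ring_scope.

(* The [N]-th coefficient of [z^k F(z)], for [F] with coefficients [f]. *)
Definition delay (f : nat -> int) (k N : nat) : int :=
  if (k <= N)%N then f (N - k)%N else 0.

Lemma sum_mul_delta (f : nat -> int) N k :
  \sum_(i < N.+1) f i * (N - i == k)%N%:R = delay f k N.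
Proof.
rewrite /delay; case: leqP => kN.
  have Nk : (N - k < N.+1)%N by lia.
  rewrite (bigD1 (Ordinal Nk)) //= subKn // eqxx mulr1 big1 ?addr0 // => i.
  rewrite -val_eqE /= => iNk; have iN := ltn_ord i.
  by rewrite (_ : (N - i == k)%N = false) ?mulr0 //; lia.
apply: big1 => i _; have iN := ltn_ord i.
by rewrite (_ : (N - i == k)%N = false) ?mulr0 //; lia.
Qed.

Lemma coef_T_den j : T_den`_j =
  (j == 0)%N%:R - 7%:R * (j == 3)%N%:R - 22%:R * (j == 6)%N%:R - 36%:R * (j == 9)%N%:R.
Proof. by rewrite /T_den !coefB !coefZ coef1 !coefXn. Qed.

Lemma coef_T_num j : T_num`_j = (j == 0)%N%:R - (j == 3)%N%:R.
Proof. by rewrite /T_num coefB coef1 coefXn. Qed.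

Lemma sum_mul_T_den (f : nat -> int) N :
  \sum_(i < N.+1) f i * T_den`_(N - i) =
  f N - 7%:R * delay f 3 N - 22%:R * delay f 6 N - 36%:R * delay f 9 N.
Proof.
have -> : f N = delay f 0 N by rewrite /delay subn0.
rewrite -!sum_mul_delta !mulr_sumr -!sumrB.
by apply: eq_bigr => i _; rewrite coef_T_den; ring.
Qed.

Lemma delay_gt (f : nat -> int) k N : (N < k)%N -> delay f k N = 0.
Proof. by rewrite /delay ltnNge => /negbTE ->. Qed.

Lemma delay_T_mul3 m k : (k <= m)%N ->
  delay (fun i => (T i)%:Z) (k * 3) (m * 3) = (completions (2 * (m - k)) empty_state)%:Z.
Proof. by move=> km; rewrite /delay leq_mul2r km orbT -mulnBl T_mul3. Qed.

Lemma delay_T_ndvd N k : ~~ (3 %| N)%N -> (3 %| k)%N -> delay (fun i => (T i)%:Z) k N = 0.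
Proof.
move=> N3 k3; rewrite /delay; case: leqP => // kN; rewrite T_ndvd //.
by apply: contra N3; rewrite -{2}(subnK kN) dvdn_addl.
Qed.

Theorem mainTheorem19 :
  forall N : nat,
    \sum_(i < N.+1) ((T i)%:Z * T_den`_(N - i)) = T_num`_N.
Proof.
move=> N; rewrite (sum_mul_T_den (fun i => (T i)%:Z)) coef_T_num.
have [/dvdnP[m ->]|N3] := boolP (3 %| N)%N; last first.
  have [N0 N3'] : (N == 0)%N = false /\ (N == 3)%N = false.
    by split; apply: contraNF N3 => /eqP ->.
  by rewrite T_ndvd // !delay_T_ndvd // N0 N3' !mulr0 !subr0.
have [c0 c2 c4] := completions_small.
case: m => [|[|[|m]]].
- by rewrite (T_mul3 0) c0 !delay_gt.
- by rewrite (T_mul3 1) (@delay_T_mul3 1 1 isT) c2 c0 !delay_gt.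
- by rewrite (T_mul3 2) (@delay_T_mul3 2 1 isT) (@delay_T_mul3 2 2 isT) c4 c2 c0 delay_gt.
rewrite T_mul3 (@delay_T_mul3 m.+3 1 isT) (@delay_T_mul3 m.+3 2 isT) (@delay_T_mul3 m.+3 3 isT).
have [-> -> -> ->] : [/\ (2 * m.+3 = 2 * m + 6)%N, (2 * (m.+3 - 1) = 2 * m + 4)%N,
  (2 * (m.+3 - 2) = 2 * m + 2)%N & (2 * (m.+3 - 3) = 2 * m)%N] by split; lia.
rewrite (completions_rec _ empty_state_in_states) -[RHS]/(0 : int).
lia.
Qed.
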